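(* Assume the setup described in the context. Then there exists a unique continuous function $f:I\to\mathbb R$ with $f(x_i)=y_i$ for $i=0,\dots,n$ such that for every $i\in N_n$ and every $x\in I_i$, $$f(x)=F_i\big(L_i^{-1}(x),\,f(L_i^{-1}(x))\big).$$ Moreover, setting $A_i=\{(x,f(x)):x\in I_i\}$ for $i\in N_n$, one has $A_i=\bigcup_{j:\,c_{ij}=1}W_i(A_j)$ for every $i\in N_n$ (so $(A_1,\dots,A_n)$ is the invariant set of the recurrent iterated function system with maps $W_1,\dots,W_n$ and connection matrix $C$), and $\bigcup_{i=1}^nA_i$ is the graph of $f$, which interpolates $P$.
   Context: Let $n\ge 2$ and $P=\{(x_i,y_i):i=0,1,\dots,n\}\subset\mathbb R^2$ with $x_0<x_1<\dots<x_n$. Put $I=[x_0,x_n]$, $N_n=\{1,\dots,n\}$ and $I_i=[x_{i-1},x_i]$ for $i\in N_n$. Let $l\ge 2$ and for $k=1,\dots,l$ let $\tilde I_k=[x_{s(k)},x_{e(k)}]$ with $s(k),e(k)\in\{0,\dots,n\}$ and $e(k)-s(k)\ge 2$. Let $\gamma:N_n\to\{1,\dots,l\}$ be a map. For each $i\in N_n$, with $k=\gamma(i)$, let $L_i:\tilde I_k\to I_i$ be a homeomorphism which is a contraction (Lipschitz constant $c_{L_i}<1$) with $L_i(\{x_{s(k)},x_{e(k)}\})=\{x_{i-1},x_i\}$. Let $a:\mathbb R\to\mathbb R$ be Lipschitz with Lipschitz constant $L_a$. For each $i\in N_n$ let $b_i:\tilde I_{\gamma(i)}\to\mathbb R$ be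 Lipschitz, and let $s_i:I_i\to\mathbb R$ be Lipschitz with Lipschitz constant $<1$ and $\sup_{x\in I_i}|s_i(x)|\cdot L_a<1$. Define $F_i:\tilde I_{\gamma(i)}\times\mathbb R\to\mathbb R$ by $F_i(x,y)=s_i(L_i(x))\,a(y)+b_i(x)$, and assume the interpolation condition: for $k=\gamma(i)$, each $\alpha\in\{s(k),e(k)\}$ and the $\beta\in\{i-1,i\}$ with $L_i(x_\alpha)=x_\beta$, one has $F_i(x_\alpha,y_\alpha)=y_\beta$. Define $W_i:\tilde I_{\gamma(i)}\times\mathbb R\to I_i\times\mathbb R$ by $W_i(x,y)=(L_i(x),F_i(x,y))$. The connection matrix $C=(c_{ij})_{i,j=1}^n$ is defined by $c_{ij}=1$ if $I_j\subset\tilde I_{\gamma(i)}$ and $c_{ij}=0$ otherwise. *)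

From Stdlib Require Import Reals Lra Lia.
Open Scope R_scope.

Definition inI (a b t : R) : Prop := a <= t <= b.

Definition cont_on (a b : R) (f : R -> R) : Prop :=
  forall t, inI a b t -> forall eps, 0 < eps -> exists delta, 0 < delta /\
    forall t', inI a b t' -> Rabs (t' - t) < delta -> Rabs (f t' - f t) < eps.

Definition homeo_on (a b c d : R) (f : R -> R) : Prop :=
  cont_on a b f /\
  (forall t, inI a b t -> inI c d (f t)) /\
  exists g : R -> R,
    (forall u, inI c d u -> inI a b (g u)) /\
    (forall t, inI a b t -> g (f t) = t) /\
    (forall u, inI c d u -> f (g u) = u) /\
    cont_on c d g.

Definition lip_on_with (a b : R) (f : R -> R) (K : R) : Prop :=
  0 <= K /\ forall t t', inI a b t -> inI a b t' -> Rabs (f t - f t') <= K * Rabs (t - t').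

Definition Fmap (sc : nat -> R -> R) (L : nat -> R -> R) (a : R -> R)
  (b : nat -> R -> R) (i : nat) (t u : R) : R :=
  sc i (L i t) * a u + b i t.

Definition Wmap (sc : nat -> R -> R) (L : nat -> R -> R) (a : R -> R)
  (b : nat -> R -> R) (i : nat) (p : R * R) : R * R :=
  (L i (fst p), Fmap sc L a b i (fst p) (snd p)).

(* connection matrix entry: c_ij = 1 iff I_j is contained in tilde I_{gamma i} *)
Definition conn (x : nat -> R) (s e gamma : nat -> nat) (i j : nat) : Prop :=
  forall t, inI (x (j - 1)%nat) (x j) t -> inI (x (s (gamma i))) (x (e (gamma i))) t.

From Stdlib Require Import Reals Lra Lia Arith IndefiniteDescription Classical.
Open Scope R_scope.

(* The function is obtained as the fixed point of the Read-Bajraktarevic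
   operator T f (u) = F_i(L_i^{-1} u, f(L_i^{-1} u)) for u in the cell I_i.
   Because |s_i| La <= q < 1 uniformly, T contracts the uniform distance on
   I = [x_0, x_n] by the factor q, and it maps continuous interpolants of the
   data to continuous interpolants (the branches agree at the nodes thanks to
   the interpolation condition). *)

Lemma guarded_choice (A B : Type) (b0 : B) (P : A -> Prop) (Rel : A -> B -> Prop) :
  (forall u, P u -> exists v, Rel u v) -> exists g : A -> B, forall u, P u -> Rel u (g u).
Proof.
  intros Htot.
  destruct (functional_choice (fun u v => P u -> Rel u v)) as [g Hg].
  - intros u. destruct (classic (P u)) as [Hu|Hu].
    + destruct (Htot u Hu) as [v Hv]. now exists v.
    + exists b0. now intros.
  - now exists g.
Qed.

Lemma Rabs_sub_triang (u v w : R) : Rabs (u - w) <= Rabs (u - v) + Rabs (v - w).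
Proof. replace (u - w) with ((u - v) + (v - w)) by ring. apply Rabs_triang. Qed.

Lemma geometric_eventually_small (q C eps : R) : 0 <= q < 1 -> 0 <= C -> 0 < eps ->
  exists N, forall m, (N <= m)%nat -> C * q ^ m < eps.
Proof.
  intros Hq HC Heps.
  destruct (pow_lt_1_zero q ltac:(rewrite Rabs_pos_eq; lra) (eps / (C + 1))) as [N HN].
  { apply Rdiv_lt_0_compat; lra. }
  exists N. intros m Hm. specialize (HN m Hm).
  rewrite Rabs_pos_eq in HN by (apply pow_le; lra).
  pose proof (pow_le q m (proj1 Hq)).
  apply (Rmult_lt_compat_l (C + 1)) in HN; [|lra].
  replace ((C + 1) * (eps / (C + 1))) with eps in HN by (field; lra). nra.
Qed.

Lemma geometric_bound_zero (z C q : R) : 0 <= q < 1 ->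
  (forall k, Rabs z <= C * q ^ k) -> z = 0.
Proof.
  intros Hq Hz. destruct (Req_dec z 0) as [|Hne]; [assumption|exfalso].
  assert (Hpos : 0 < Rabs z) by (apply Rabs_pos_lt; assumption).
  assert (HC : 0 <= C) by (specialize (Hz 0%nat); simpl in Hz; lra).
  destruct (geometric_eventually_small q C (Rabs z) Hq HC Hpos) as [N HN].
  specialize (HN N (le_n N)). specialize (Hz N). lra.
Qed.

Lemma limit_dist_le (U : nat -> R) (lim c B : R) (k : nat) : Un_cv U lim ->
  (forall m, (k <= m)%nat -> Rabs (U m - c) <= B) -> Rabs (lim - c) <= B.
Proof.
  intros Hcv Hb. destruct (Rle_dec (Rabs (lim - c)) B) as [|Hgt]; [assumption|exfalso].
  destruct (Hcv (Rabs (lim - c) - B)) as [N HN]; [lra|].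
  specialize (HN (Nat.max N k) ltac:(lia)). specialize (Hb (Nat.max N k) ltac:(lia)).
  unfold R_dist in HN. rewrite Rabs_minus_sym in HN.
  pose proof (Rabs_sub_triang lim (U (Nat.max N k)) c). lra.
Qed.

Lemma common_bound_below_one (n : nat) (B : nat -> R -> Prop) :
  (forall i, (1 <= i <= n)%nat -> exists c, c < 1 /\ forall t, B i t -> t <= c) ->
  exists q, 0 <= q < 1 /\ forall i t, (1 <= i <= n)%nat -> B i t -> t <= q.
Proof.
  induction n as [|n IH]; intros Hb.
  - exists 0. split; [lra|]. intros; lia.
  - destruct IH as [q [Hq Hqb]]; [intros i Hi; apply Hb; lia|].
    destruct (Hb (S n) ltac:(lia)) as [c [Hc Hcb]].
    exists (Rmax q c). split; [split; [apply Rle_trans with q; [lra | apply Rmax_l] | apply Rmax_lub_lt; lra]|].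
    intros i t Hi Ht. destruct (Nat.eq_dec i (S n)) as [->|Hne].
    + eapply Rle_trans; [apply Hcb, Ht | apply Rmax_r].
    + eapply Rle_trans; [apply (Hqb i t ltac:(lia) Ht) | apply Rmax_l].
Qed.

(* Continuity on a closed interval, reduced to pointwise continuity by
   composing with the retraction [clamp a b] of R onto [a,b]. *)
Definition clamp (a b t : R) : R := Rmin b (Rmax a t).

Lemma clamp_in (a b t : R) : a <= b -> inI a b (clamp a b t).
Proof. intros. unfold inI, clamp, Rmin, Rmax. repeat destruct Rle_dec; lra. Qed.

Lemma clamp_id (a b t : R) : inI a b t -> clamp a b t = t.
Proof. unfold inI, clamp, Rmin, Rmax. intros. repeat destruct Rle_dec; lra. Qed.

Lemma clamp_1lip (a b t t' : R) : Rabs (clamp a b t - clamp a b t') <= Rabs (t - t').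
Proof.
  unfold clamp, Rmin, Rmax. repeat destruct Rle_dec; unfold Rabs; repeat destruct Rcase_abs; lra.
Qed.

Lemma continuity_pt_eps (h : R -> R) (t : R) : continuity_pt h t ->
  forall eps, 0 < eps -> exists d, 0 < d /\
    forall t', Rabs (t' - t) < d -> Rabs (h t' - h t) < eps.
Proof.
  unfold continuity_pt, continue_in, limit1_in, limit_in; simpl; unfold R_dist.
  intros Hc eps Heps. destruct (Hc eps Heps) as [d [Hd Hd']].
  exists d; split; [lra|]. intros t' Ht'. destruct (Req_dec t' t) as [->|Hne].
  - replace (h t - h t) with 0 by ring. rewrite Rabs_R0; lra.
  - apply Hd'. repeat split; auto.
Qed.

Lemma cont_on_clamp (a b : R) (h : R -> R) : a <= b ->
  cont_on a b h <-> forall t, continuity_pt (fun z => h (clamp a b z)) t.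
Proof.
  intros Hab. split.
  - intros Hc t. unfold continuity_pt, continue_in, limit1_in, limit_in; simpl; unfold R_dist.
    intros eps Heps. destruct (Hc _ (clamp_in a b t Hab) eps Heps) as [d [Hd Hd']].
    exists d; split; [exact Hd|]. intros z [_ Hz]. apply Hd'; [apply clamp_in; exact Hab|].
    eapply Rle_lt_trans; [apply clamp_1lip | exact Hz].
  - intros Hc t Ht eps Heps.
    destruct (continuity_pt_eps _ t (Hc t) eps Heps) as [d [Hd Hd']].
    exists d; split; [exact Hd|]. intros t' Ht' Hdist.
    specialize (Hd' t' Hdist). now rewrite !clamp_id in Hd'.
Qed.

Lemma cont_on_ext (a b : R) (h h' : R -> R) : cont_on a b h ->
  (forall t, inI a b t -> h t = h' t) -> cont_on a b h'.
Proof.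
  intros Hc He t Ht eps Heps. destruct (Hc t Ht eps Heps) as [d [Hd Hd']].
  exists d; split; [exact Hd|]. intros t' Ht' Hdist.
  rewrite <- (He t Ht), <- (He t' Ht'). auto.
Qed.

Lemma lip_cont_on (a b : R) (h : R -> R) (K : R) : lip_on_with a b h K -> cont_on a b h.
Proof.
  intros [HK Hlip] t Ht eps Heps. exists (eps / (K + 1)). split; [apply Rdiv_lt_0_compat; lra|].
  intros t' Ht' Hdist. eapply Rle_lt_trans; [apply Hlip; assumption|].
  apply (Rmult_lt_compat_l (K + 1)) in Hdist; [|lra].
  replace ((K + 1) * (eps / (K + 1))) with eps in Hdist by (field; lra).
  pose proof (Rabs_pos (t' - t)). nra.
Qed.

Lemma cont_on_comp (a b c d : R) (g h : R -> R) :
  (forall t, inI a b t -> inI c d (g t)) -> cont_on a b g -> cont_on c d h ->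
  cont_on a b (fun t => h (g t)).
Proof.
  intros Hmap Hg Hh t Ht eps Heps.
  destruct (Hh (g t) (Hmap t Ht) eps Heps) as [d1 [Hd1 Hd1']].
  destruct (Hg t Ht d1 Hd1) as [d2 [Hd2 Hd2']].
  exists d2; split; [exact Hd2|]. intros t' Ht' Hdist. apply Hd1'; auto.
Qed.

Lemma cont_on_lip_comp (a b K : R) (g h : R -> R) : 0 <= K ->
  (forall u v, Rabs (h u - h v) <= K * Rabs (u - v)) -> cont_on a b g ->
  cont_on a b (fun t => h (g t)).
Proof.
  intros HK Hlip Hg t Ht eps Heps.
  destruct (Hg t Ht (eps / (K + 1)) ltac:(apply Rdiv_lt_0_compat; lra)) as [d [Hd Hd']].
  exists d; split; [exact Hd|]. intros t' Ht' Hdist. specialize (Hd' t' Ht' Hdist).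
  eapply Rle_lt_trans; [apply Hlip|].
  apply (Rmult_lt_compat_l (K + 1)) in Hd'; [|lra].
  replace ((K + 1) * (eps / (K + 1))) with eps in Hd' by (field; lra).
  pose proof (Rabs_pos (g t' - g t)). nra.
Qed.

Lemma cont_on_plus (a b : R) (g h : R -> R) : a <= b -> cont_on a b g -> cont_on a b h ->
  cont_on a b (fun t => g t + h t).
Proof.
  intros Hab Hg Hh. apply cont_on_clamp; [exact Hab|]. intros t.
  apply continuity_pt_plus; revert t; apply cont_on_clamp; assumption.
Qed.

Lemma cont_on_mult (a b : R) (g h : R -> R) : a <= b -> cont_on a b g -> cont_on a b h ->
  cont_on a b (fun t => g t * h t).
Proof.
  intros Hab Hg Hh. apply cont_on_clamp; [exact Hab|]. intros t.
  apply continuity_pt_mult; revert t; apply cont_on_clamp; assumption.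
Qed.

Lemma cont_on_glue (a m c : R) (h : R -> R) : a <= m -> m <= c ->
  cont_on a m h -> cont_on m c h -> cont_on a c h.
Proof.
  intros Ham Hmc H1 H2 t Ht eps Heps. unfold inI in *.
  destruct (Rtotal_order t m) as [Hlt|[->|Hgt]].
  - destruct (H1 t ltac:(unfold inI; lra) eps Heps) as [d [Hd Hd']].
    exists (Rmin d (m - t)). split; [apply Rmin_pos; lra|]. intros t' Ht' Hdist.
    pose proof (Rmin_l d (m - t)). pose proof (Rmin_r d (m - t)).
    apply Hd'; [|lra]. unfold inI. apply Rabs_def2 in Hdist. lra.
  - destruct (H1 m ltac:(unfold inI; lra) eps Heps) as [d1 [Hd1 Hd1']].
    destruct (H2 m ltac:(unfold inI; lra) eps Heps) as [d2 [Hd2 Hd2']].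
    exists (Rmin d1 d2). split; [apply Rmin_pos; lra|]. intros t' Ht' Hdist.
    pose proof (Rmin_l d1 d2). pose proof (Rmin_r d1 d2).
    destruct (Rle_dec t' m).
    + apply Hd1'; [unfold inI|]; lra.
    + apply Hd2'; [unfold inI|]; lra.
  - destruct (H2 t ltac:(unfold inI; lra) eps Heps) as [d [Hd Hd']].
    exists (Rmin d (t - m)). split; [apply Rmin_pos; lra|]. intros t' Ht' Hdist.
    pose proof (Rmin_l d (t - m)). pose proof (Rmin_r d (t - m)).
    apply Hd'; [|lra]. unfold inI. apply Rabs_def2 in Hdist. lra.
Qed.

Lemma cont_on_bounded (a b : R) (h : R -> R) : a <= b -> cont_on a b h ->
  exists M, forall t, inI a b t -> Rabs (h t) <= M.
Proof.
  intros Hab Hc. pose proof (proj1 (cont_on_clamp a b h Hab) Hc) as Hpt.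
  destruct (continuity_ab_maj _ a b Hab (fun c _ => Hpt c)) as [tmax [Hmax _]].
  destruct (continuity_ab_min _ a b Hab (fun c _ => Hpt c)) as [tmin [Hmin _]].
  exists (Rmax (Rabs (h (clamp a b tmax))) (Rabs (h (clamp a b tmin)))).
  intros t Ht. specialize (Hmax t Ht). specialize (Hmin t Ht). cbv beta in Hmax, Hmin.
  rewrite (clamp_id a b t Ht) in Hmax, Hmin.
  pose proof (Rmax_l (Rabs (h (clamp a b tmax))) (Rabs (h (clamp a b tmin)))).
  pose proof (Rmax_r (Rabs (h (clamp a b tmax))) (Rabs (h (clamp a b tmin)))).
  pose proof (Rle_abs (h (clamp a b tmax))). pose proof (Rle_abs (- h (clamp a b tmin))).
  rewrite Rabs_Ropp in *. apply Rabs_le. lra.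
Qed.

Lemma cont_on_uniform_limit (a b q C : R) (f : R -> R) (fk : nat -> R -> R) :
  0 <= q < 1 -> 0 <= C -> (forall k, cont_on a b (fk k)) ->
  (forall k t, inI a b t -> Rabs (f t - fk k t) <= C * q ^ k) -> cont_on a b f.
Proof.
  intros Hq HC Hcont Hclose t Ht eps Heps.
  destruct (geometric_eventually_small q C (eps / 3) Hq HC ltac:(lra)) as [N HN].
  destruct (Hcont N t Ht (eps / 3) ltac:(lra)) as [d [Hd Hd']].
  exists d; split; [exact Hd|]. intros t' Ht' Hdist.
  pose proof (Hclose N t Ht). pose proof (Hclose N t' Ht'). pose proof (Hd' t' Ht' Hdist).
  pose proof (HN N (le_n N)). rewrite Rabs_minus_sym in H.
  pose proof (Rabs_sub_triang (f t') (fk N t') (f t)).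
  pose proof (Rabs_sub_triang (fk N t') (fk N t) (f t)). lra.
Qed.

Definition within (lo hi : R) (f g : R -> R) (D : R) : Prop :=
  forall t, inI lo hi t -> Rabs (f t - g t) <= D.

Lemma cont_on_within (lo hi : R) (f g : R -> R) : lo <= hi ->
  cont_on lo hi f -> cont_on lo hi g -> exists D, 0 <= D /\ within lo hi f g D.
Proof.
  intros Hle Hf Hg.
  destruct (cont_on_bounded lo hi f Hle Hf) as [Mf HMf].
  destruct (cont_on_bounded lo hi g Hle Hg) as [Mg HMg].
  assert (Hlo : inI lo hi lo) by (unfold inI; lra).
  exists (Mf + Mg). split.
  - pose proof (HMf lo Hlo). pose proof (HMg lo Hlo).
    pose proof (Rabs_pos (f lo)). pose proof (Rabs_pos (g lo)). lra.
  - intros t Ht. pose proof (Rabs_sub_triang (f t) 0 (g t)) as Htri.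
    rewrite Rminus_0_r, Rminus_0_l, Rabs_Ropp in Htri.
    pose proof (HMf t Ht). pose proof (HMg t Ht). lra.
Qed.

Section UniformContraction.

Variables (lo hi q : R) (T : (R -> R) -> R -> R).
Hypothesis q_range : 0 <= q < 1.
Hypothesis T_contraction : forall f g D, within lo hi f g D -> within lo hi (T f) (T g) (q * D).

Definition picard (f0 : R -> R) (k : nat) : R -> R := Nat.iter k T f0.

Lemma fixed_point_unique (f g : R -> R) (D : R) :
  (forall t, inI lo hi t -> T f t = f t) -> (forall t, inI lo hi t -> T g t = g t) ->
  within lo hi f g D -> forall t, inI lo hi t -> f t = g t.
Proof.
  intros Hf Hg HD t Ht. apply Rminus_diag_uniq.
  apply (geometric_bound_zero _ D q q_range). intros k. revert t Ht. induction k as [|k IH].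
  - intros t Ht. simpl. rewrite Rmult_1_r. auto.
  - intros t Ht. rewrite <- (Hf t Ht), <- (Hg t Ht).
    eapply Rle_trans; [apply (T_contraction f g _ IH t Ht)|]. simpl. lra.
Qed.

Lemma picard_cauchy (f0 : R -> R) (D0 : R) : 0 <= D0 -> within lo hi (T f0) f0 D0 ->
  forall k m, (k <= m)%nat ->
    within lo hi (picard f0 m) (picard f0 k) (D0 / (1 - q) * q ^ k).
Proof.
  intros HD0pos HD0. set (fs := picard f0). set (C := D0 / (1 - q)).
  assert (HC : 0 <= C) by (unfold C; apply Rmult_le_pos; [lra | left; apply Rinv_0_lt_compat; lra]).
  assert (Hstep : forall k, within lo hi (fs (S k)) (fs k) (D0 * q ^ k)).
  { induction k as [|k IH]; [simpl; rewrite Rmult_1_r; exact HD0|].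
    intros t Ht. eapply Rle_trans; [apply (T_contraction _ _ _ IH t Ht)|]. simpl; lra. }
  (* the sharper telescoped bound C q^k (1 - q^(m-k)) *)
  assert (Hgap : forall k m, (k <= m)%nat ->
    within lo hi (fs m) (fs k) (C * q ^ k * (1 - q ^ (m - k)))).
  { intros k m Hkm. induction Hkm as [|m Hkm IH]; intros t Ht.
    - rewrite Nat.sub_diag, Rminus_diag_eq by reflexivity. simpl. rewrite Rabs_R0. lra.
    - pose proof (Rabs_sub_triang (fs (S m) t) (fs m t) (fs k t)) as Htri.
      pose proof (Hstep m t Ht) as Hs. pose proof (IH t Ht) as Hm.
      replace (S m - k)%nat with (S (m - k)) by lia.
      replace (q ^ m) with (q ^ k * q ^ (m - k)) in Hs by (rewrite <- pow_add; f_equal; lia).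
      replace D0 with (C * (1 - q)) in Hs by (unfold C; field; lra).
      change (q ^ S (m - k)) with (q * q ^ (m - k)).
      assert (C * (1 - q) * (q ^ k * q ^ (m - k)) + C * q ^ k * (1 - q ^ (m - k))
              = C * q ^ k * (1 - q * q ^ (m - k))) by ring.
      lra. }
  intros k m Hkm t Ht. eapply Rle_trans; [apply (Hgap k m Hkm t Ht)|].
  pose proof (pow_le q (m - k) (proj1 q_range)). pose proof (pow_le q k (proj1 q_range)).
  assert (0 <= C * q ^ k) by (apply Rmult_le_pos; assumption). nra.
Qed.

Lemma picard_fixed_point (f0 : R -> R) (D0 : R) : 0 <= D0 -> within lo hi (T f0) f0 D0 ->
  exists f C, 0 <= C /\ (forall t, inI lo hi t -> T f t = f t) /\
    forall k, within lo hi f (picard f0 k) (C * q ^ k).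
Proof.
  intros HD0pos HD0. pose proof (picard_cauchy f0 D0 HD0pos HD0) as Hcauchy.
  set (fs := picard f0) in *. set (C := D0 / (1 - q)) in *.
  assert (HC : 0 <= C) by (unfold C; apply Rmult_le_pos; [lra | left; apply Rinv_0_lt_compat; lra]).
  destruct (guarded_choice R R 0 (inI lo hi) (fun t v => Un_cv (fun k => fs k t) v)) as [f Hf].
  { intros t Ht. destruct (R_complete (fun k => fs k t)) as [v Hv]; [|now exists v].
    intros eps Heps.
    destruct (geometric_eventually_small q C (eps / 2) q_range HC ltac:(lra)) as [N HN].
    exists N. intros p m Hp Hm. unfold R_dist.
    pose proof (Hcauchy N p Hp t Ht) as Hp'. pose proof (Hcauchy N m Hm t Ht) as Hm'.
    pose proof (HN N (le_n N)). pose proof (Rabs_sub_triang (fs p t) (fs N t) (fs m t)) as Htri.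
    rewrite (Rabs_minus_sym (fs N t)) in Htri. lra. }
  assert (Hrate : forall k, within lo hi f (fs k) (C * q ^ k)).
  { intros k t Ht. apply (limit_dist_le _ _ _ _ k (Hf t Ht)). intros m Hm. exact (Hcauchy k m Hm t Ht). }
  exists f, C. split; [exact HC|]. split; [|exact Hrate].
  (* |T f - f| <= |T f - T fs_k| + |fs_(k+1) - f| <= 2 C q^k *)
  intros t Ht. apply Rminus_diag_uniq. apply (geometric_bound_zero _ (2 * C) q q_range). intros k.
  pose proof (T_contraction _ _ _ (Hrate k) t Ht) as Hl. pose proof (Hrate (S k) t Ht) as Hr.
  pose proof (Rabs_sub_triang (T f t) (fs (S k) t) (f t)) as Htri.
  rewrite (Rabs_minus_sym (fs (S k) t)) in Htri.
  pose proof (pow_le q k (proj1 q_range)). assert (0 <= C * q ^ k) by (apply Rmult_le_pos; assumption).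
  change (fs (S k)) with (T (fs k)) in *. simpl pow in *. nra.
Qed.
End UniformContraction.

Section Partition.

Variables (x : nat -> R) (n : nat).
Hypothesis x_incr : forall i, (i < n)%nat -> x i < x (S i).

Local Notation cell i := (inI (x (i - 1)%nat) (x i)).
Local Notation interval := (inI (x 0%nat) (x n)).

Lemma nodes_lt (j k : nat) : (j < k <= n)%nat -> x j < x k.
Proof.
  induction k as [|k IH]; intros Hjk; [lia|].
  destruct (Nat.eq_dec j k) as [->|Hne]; [apply x_incr; lia|].
  apply Rlt_trans with (x k); [apply IH; lia | apply x_incr; lia].
Qed.

Lemma nodes_le (j k : nat) : (j <= k <= n)%nat -> x j <= x k.
Proof.
  intros Hjk. destruct (Nat.eq_dec j k) as [->|Hne]; [lra|].
  left. apply nodes_lt. lia.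
Qed.

Lemma cells_cover (p m : nat) (t : R) : (p < m)%nat -> inI (x p) (x m) t ->
  exists j, (p < j <= m)%nat /\ cell j t.
Proof.
  induction m as [|m IH]; intros Hpm Ht; [lia|].
  destruct (Rle_dec (x m) t) as [Hle|Hlt].
  - exists (S m). split; [lia|]. unfold inI in *. replace (S m - 1)%nat with m by lia. lra.
  - destruct (Nat.eq_dec p m) as [->|Hne]; [unfold inI in Ht; lra|].
    destruct (IH ltac:(lia)) as [j [Hj Hjt]]; [unfold inI in *; lra|].
    exists j. split; [lia | exact Hjt].
Qed.

Lemma cell_in_interval (i : nat) (t : R) : (1 <= i <= n)%nat -> cell i t -> interval t.
Proof.
  intros Hi Ht. unfold inI in *.
  pose proof (nodes_le 0 (i - 1) ltac:(lia)). pose proof (nodes_le i n ltac:(lia)). lra.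
Qed.

Lemma node_in_cell (i j : nat) : (1 <= i <= n)%nat -> (j <= n)%nat -> cell i (x j) ->
  (j = i - 1 \/ j = i)%nat.
Proof.
  intros Hi Hj [Hlo Hhi].
  destruct (lt_eq_lt_dec j (i - 1)) as [[Hlt|Heq]|Hgt]; [|now left|].
  - pose proof (nodes_lt j (i - 1) ltac:(lia)). lra.
  - destruct (Nat.eq_dec j i) as [|Hne]; [now right|].
    pose proof (nodes_lt i j ltac:(lia)). lra.
Qed.

Lemma cells_meet_at_node (i i' : nat) (u : R) : (1 <= i <= n)%nat -> (1 <= i' <= n)%nat ->
  cell i u -> cell i' u ->
  i = i' \/ exists m, (m = i - 1 \/ m = i)%nat /\ (m = i' - 1 \/ m = i')%nat /\ u = x m.
Proof.
  intros Hi Hi' Hu Hu'. unfold inI in *.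
  destruct (lt_eq_lt_dec i i') as [[Hlt|Heq]|Hgt]; [right| now left | right].
  - destruct (Nat.eq_dec (i' - 1) i) as [Heq|Hne].
    + exists i. rewrite Heq in Hu'. split; [lia|]. split; [lia|]. lra.
    + pose proof (nodes_lt i (i' - 1) ltac:(lia)). lra.
  - destruct (Nat.eq_dec (i - 1) i') as [Heq|Hne].
    + exists i'. rewrite Heq in Hu. split; [lia|]. split; [lia|]. lra.
    + pose proof (nodes_lt i' (i - 1) ltac:(lia)). lra.
Qed.

Hypothesis n_pos : (1 <= n)%nat.

Lemma cells_cover_interval (t : R) :
  (exists i, (1 <= i <= n)%nat /\ cell i t) <-> interval t.
Proof.
  split.
  - intros [i [Hi Ht]]. exact (cell_in_interval i t Hi Ht).
  - intros Ht. destruct (cells_cover 0 n t ltac:(lia) Ht) as [j [Hj Hjt]].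
    exists j. split; [lia | exact Hjt].
Qed.

Lemma cell_index_exists :
  exists idx : R -> nat, forall u, interval u -> (1 <= idx u <= n)%nat /\ cell (idx u) u.
Proof.
  apply (guarded_choice R nat 0%nat interval (fun u j => (1 <= j <= n)%nat /\ cell j u)).
  intros u Hu. exact (proj2 (cells_cover_interval u) Hu).
Qed.

Section Gluing.

Variable idx : R -> nat.
Hypothesis idx_spec : forall u, interval u -> (1 <= idx u <= n)%nat /\ cell (idx u) u.

Lemma glue_cells (phi : nat -> R -> R) (v : nat -> R) :
  (forall i, (1 <= i <= n)%nat -> cont_on (x (i - 1)%nat) (x i) (phi i)) ->
  (forall i m, (1 <= i <= n)%nat -> (m = i - 1 \/ m = i)%nat -> phi i (x m) = v m) ->
  (forall i u, (1 <= i <= n)%nat -> cell i u -> phi (idx u) u = phi i u) /\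
  cont_on (x 0%nat) (x n) (fun u => phi (idx u) u).
Proof.
  intros Hcont Hnodes.
  assert (Hagree : forall i u, (1 <= i <= n)%nat -> cell i u -> phi (idx u) u = phi i u).
  { intros i u Hi Hu. destruct (idx_spec u (cell_in_interval i u Hi Hu)) as [Hj Hju].
    destruct (cells_meet_at_node i (idx u) u Hi Hj Hu Hju) as [<-|[m [Hm [Hm' ->]]]]; [reflexivity|].
    rewrite (Hnodes i m Hi Hm), (Hnodes _ m Hj Hm'). reflexivity. }
  split; [exact Hagree|].
  assert (Hprefix : forall m, (1 <= m <= n)%nat -> cont_on (x 0%nat) (x m) (fun u => phi (idx u) u)).
  { induction m as [|m IH]; intros Hm; [lia|].
    assert (Hlast : cont_on (x m) (x (S m)) (fun u => phi (idx u) u)).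
    { apply cont_on_ext with (phi (S m)).
      - replace m with (S m - 1)%nat at 1 by lia. apply Hcont. lia.
      - intros t Ht. symmetry. apply Hagree; [lia|]. now replace (S m - 1)%nat with m by lia. }
    destruct (Nat.eq_dec m 0) as [->|Hm0]; [exact Hlast|].
    apply cont_on_glue with (x m); [apply nodes_le; lia | apply nodes_le; lia | apply IH; lia | exact Hlast]. }
  apply Hprefix. lia.
Qed.

Lemma linear_interpolant_exists (y : nat -> R) :
  exists f0 : R -> R, cont_on (x 0%nat) (x n) f0 /\ forall j, (j <= n)%nat -> f0 (x j) = y j.
Proof.
  set (lin := fun (i : nat) (u : R) =>
    y (i - 1)%nat + (y i - y (i - 1)%nat) / (x i - x (i - 1)%nat) * (u - x (i - 1)%nat)).
  assert (Hnodes : forall i m, (1 <= i <= n)%nat -> (m = i - 1 \/ m = i)%nat -> lin i (x m) = y m).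
  { intros i m Hi [-> | ->]; unfold lin; [ring|].
    pose proof (nodes_lt (i - 1) i ltac:(lia)). field. lra. }
  assert (Hcont : forall i, (1 <= i <= n)%nat -> cont_on (x (i - 1)%nat) (x i) (lin i)).
  { intros i Hi. apply (lip_cont_on _ _ _ (Rabs ((y i - y (i - 1)%nat) / (x i - x (i - 1)%nat)))).
    split; [apply Rabs_pos|]. intros t t' _ _. unfold lin. rewrite <- Rabs_mult. right. f_equal. ring. }
  destruct (glue_cells lin y Hcont Hnodes) as [_ Hglued].
  exists (fun u => lin (idx u) u). split; [exact Hglued|].
  intros j Hj. assert (Hxj : interval (x j)) by (split; apply nodes_le; lia).
  destruct (idx_spec _ Hxj) as [Hi Hin]. apply Hnodes; [exact Hi|].
  apply node_in_cell; assumption.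
Qed.

End Gluing.
End Partition.

Lemma inverse_branches (n : nat) (lo hi clo chi : nat -> R) (L : nat -> R -> R) :
  (forall i, (1 <= i <= n)%nat -> homeo_on (lo i) (hi i) (clo i) (chi i) (L i)) ->
  exists Linv : nat -> R -> R, forall i, (1 <= i <= n)%nat ->
    (forall u, inI (clo i) (chi i) u -> inI (lo i) (hi i) (Linv i u)) /\
    (forall t, inI (lo i) (hi i) t -> Linv i (L i t) = t) /\
    (forall u, inI (clo i) (chi i) u -> L i (Linv i u) = u) /\ cont_on (clo i) (chi i) (Linv i).
Proof.
  intros Hhomeo.
  destruct (guarded_choice nat (R -> R) (fun u => u) (fun i => (1 <= i <= n)%nat)
    (fun i g => (forall u, inI (clo i) (chi i) u -> inI (lo i) (hi i) (g u)) /\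
       (forall t, inI (lo i) (hi i) t -> g (L i t) = t) /\
       (forall u, inI (clo i) (chi i) u -> L i (g u) = u) /\ cont_on (clo i) (chi i) g))
    as [Linv HLinv].
  - intros i Hi. destruct (Hhomeo i Hi) as [_ [_ [g Hg]]]. now exists g.
  - now exists Linv.
Qed.

Section FractalInterpolation.

Variables (n : nat) (x y : nat -> R) (s e gamma : nat -> nat)
  (L : nat -> R -> R) (a : R -> R) (La : R) (b sc : nat -> R -> R).

Local Notation cell i := (inI (x (i - 1)%nat) (x i)).
Local Notation dom i := (inI (x (s (gamma i))) (x (e (gamma i)))).
Local Notation interval := (inI (x 0%nat) (x n)).
Local Notation F := (Fmap sc L a b).

Hypothesis x_incr : forall i, (i < n)%nat -> x i < x (S i).
Hypothesis n_pos : (1 <= n)%nat.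
Hypothesis dom_nodes : forall i, (1 <= i <= n)%nat -> (s (gamma i) < e (gamma i) <= n)%nat.
Hypothesis L_homeo : forall i, (1 <= i <= n)%nat ->
  homeo_on (x (s (gamma i))) (x (e (gamma i))) (x (i - 1)%nat) (x i) (L i).
Hypothesis L_ends : forall i, (1 <= i <= n)%nat ->
  (L i (x (s (gamma i))) = x (i - 1)%nat /\ L i (x (e (gamma i))) = x i) \/
  (L i (x (s (gamma i))) = x i /\ L i (x (e (gamma i))) = x (i - 1)%nat).
Hypothesis a_lip : 0 <= La /\ forall u v, Rabs (a u - a v) <= La * Rabs (u - v).
Hypothesis b_lip : forall i, (1 <= i <= n)%nat -> exists K,
  lip_on_with (x (s (gamma i))) (x (e (gamma i))) (b i) K.
Hypothesis sc_lip : forall i, (1 <= i <= n)%nat -> exists c,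
  lip_on_with (x (i - 1)%nat) (x i) (sc i) c.
Hypothesis F_interp : forall i, (1 <= i <= n)%nat -> forall alpha beta : nat,
  (alpha = s (gamma i) \/ alpha = e (gamma i)) -> (beta = (i - 1)%nat \/ beta = i) ->
  L i (x alpha) = x beta -> F i (x alpha) (y alpha) = y beta.

(* Auxiliary data chosen once and for all: the inverses of the L_i, a cell
   containing each point of I, and a common contraction factor [q] of the
   maps y |-> F_i(t, y). *)
Variables (Linv : nat -> R -> R) (idx : R -> nat) (q : R).
Hypothesis Linv_spec : forall i, (1 <= i <= n)%nat ->
  (forall u, cell i u -> dom i (Linv i u)) /\ (forall t, dom i t -> Linv i (L i t) = t) /\
  (forall u, cell i u -> L i (Linv i u) = u) /\ cont_on (x (i - 1)%nat) (x i) (Linv i).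
Hypothesis idx_spec : forall u, interval u -> (1 <= idx u <= n)%nat /\ cell (idx u) u.
Hypothesis q_range : 0 <= q < 1.
Hypothesis sc_small : forall i u, (1 <= i <= n)%nat -> cell i u -> Rabs (sc i u) * La <= q.

Definition is_fif (f : R -> R) : Prop :=
  cont_on (x 0%nat) (x n) f /\
  (forall i, (i <= n)%nat -> f (x i) = y i) /\
  (forall i, (1 <= i <= n)%nat -> forall t u, cell i u -> dom i t -> L i t = u ->
     f u = F i t (f t)).

Lemma dom_in_interval (i : nat) (t : R) : (1 <= i <= n)%nat -> dom i t -> interval t.
Proof.
  intros Hi Ht. pose proof (dom_nodes i Hi). unfold inI in *.
  pose proof (nodes_le x n x_incr 0 (s (gamma i)) ltac:(lia)).
  pose proof (nodes_le x n x_incr (e (gamma i)) n ltac:(lia)). lra.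
Qed.

Lemma dom_nonempty (i : nat) : (1 <= i <= n)%nat -> x (s (gamma i)) <= x (e (gamma i)).
Proof. intros Hi. pose proof (dom_nodes i Hi). apply (nodes_le x n x_incr). lia. Qed.

Lemma L_maps_dom (i : nat) (t : R) : (1 <= i <= n)%nat -> dom i t -> cell i (L i t).
Proof. intros Hi. destruct (L_homeo i Hi) as [_ [HL _]]. apply HL. Qed.

Lemma F_contraction (i : nat) (t z1 z2 : R) : (1 <= i <= n)%nat -> dom i t ->
  Rabs (F i t z1 - F i t z2) <= q * Rabs (z1 - z2).
Proof.
  intros Hi Ht. unfold Fmap.
  replace (sc i (L i t) * a z1 + b i t - (sc i (L i t) * a z2 + b i t))
    with (sc i (L i t) * (a z1 - a z2)) by ring.
  rewrite Rabs_mult. pose proof (sc_small i (L i t) Hi (L_maps_dom i t Hi Ht)).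
  destruct a_lip as [HLa Ha]. pose proof (Ha z1 z2).
  pose proof (Rabs_pos (sc i (L i t))). pose proof (Rabs_pos (z1 - z2)). nra.
Qed.

Definition branch (f : R -> R) (i : nat) (u : R) : R := F i (Linv i u) (f (Linv i u)).

Definition rb_operator (f : R -> R) (u : R) : R := branch f (idx u) u.

(* By the interpolation condition, every branch of an interpolant takes the
   data values at the endpoints of its cell. *)
Lemma branch_at_nodes (f : R -> R) : (forall j, (j <= n)%nat -> f (x j) = y j) ->
  forall i m, (1 <= i <= n)%nat -> (m = i - 1 \/ m = i)%nat -> branch f i (x m) = y m.
Proof.
  intros Hf i m Hi Hm. pose proof (dom_nodes i Hi).
  destruct (Linv_spec i Hi) as [_ [Hinv _]]. unfold branch.
  assert (Hs : dom i (x (s (gamma i)))) by (pose proof (dom_nonempty i Hi); unfold inI; lra).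
  assert (He : dom i (x (e (gamma i)))) by (pose proof (dom_nonempty i Hi); unfold inI; lra).
  destruct (L_ends i Hi) as [[E1 E2]|[E1 E2]]; destruct Hm as [-> | ->];
    [rewrite <- E1 | rewrite <- E2 | rewrite <- E2 | rewrite <- E1];
    rewrite Hinv by assumption; rewrite Hf by lia; apply F_interp; auto.
Qed.

Lemma branch_cont (f : R -> R) : cont_on (x 0%nat) (x n) f ->
  forall i, (1 <= i <= n)%nat -> cont_on (x (i - 1)%nat) (x i) (branch f i).
Proof.
  intros Hf i Hi. destruct (Linv_spec i Hi) as [Hmaps [_ [Hright Hcont]]].
  assert (Hcell : x (i - 1)%nat <= x i) by (apply (nodes_le x n x_incr); lia).
  apply cont_on_ext with (fun u => sc i u * a (f (Linv i u)) + b i (Linv i u)).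
  2: { intros u Hu. unfold branch, Fmap. now rewrite Hright. }
  destruct (sc_lip i Hi) as [cs Hcs]. destruct (b_lip i Hi) as [Kb Hkb].
  apply cont_on_plus; [exact Hcell| |].
  - apply cont_on_mult; [exact Hcell | exact (lip_cont_on _ _ _ _ Hcs)|].
    apply (cont_on_lip_comp _ _ La); [apply a_lip | apply a_lip|].
    apply (cont_on_comp _ _ (x 0%nat) (x n)); [|exact Hcont|exact Hf].
    intros u Hu. exact (dom_in_interval i _ Hi (Hmaps u Hu)).
  - apply (cont_on_comp _ _ (x (s (gamma i))) (x (e (gamma i)))); [exact Hmaps | exact Hcont|].
    exact (lip_cont_on _ _ _ _ Hkb).
Qed.

Definition interpolates (f : R -> R) : Prop :=
  cont_on (x 0%nat) (x n) f /\ forall j, (j <= n)%nat -> f (x j) = y j.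

Lemma rb_interpolant (f : R -> R) : interpolates f ->
  interpolates (rb_operator f) /\
  (forall i u, (1 <= i <= n)%nat -> cell i u -> rb_operator f u = branch f i u).
Proof.
  intros [Hcont Hnodes].
  destruct (glue_cells x n x_incr n_pos idx idx_spec (branch f) y (branch_cont f Hcont)
    (branch_at_nodes f Hnodes)) as [Hagree Hglued].
  split; [split; [exact Hglued|] | exact Hagree].
  intros j Hj. assert (Hxj : interval (x j)) by (split; apply (nodes_le x n x_incr); lia).
  destruct (idx_spec _ Hxj) as [Hi Hin]. apply (branch_at_nodes f Hnodes _ _ Hi).
  exact (node_in_cell x n x_incr _ _ Hi Hj Hin).
Qed.

Lemma rb_contraction (f g : R -> R) (D : R) :
  within (x 0%nat) (x n) f g D -> within (x 0%nat) (x n) (rb_operator f) (rb_operator g) (q * D).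
Proof.
  intros HD u Hu. destruct (idx_spec u Hu) as [Hi Hin].
  destruct (Linv_spec _ Hi) as [Hmaps _]. unfold rb_operator, branch.
  eapply Rle_trans; [apply F_contraction; [exact Hi | exact (Hmaps u Hin)]|].
  apply Rmult_le_compat_l; [lra|]. apply HD. exact (dom_in_interval _ _ Hi (Hmaps u Hin)).
Qed.

Lemma fif_is_fixed (f : R -> R) : is_fif f -> forall u, interval u -> rb_operator f u = f u.
Proof.
  intros [_ [_ Hself]] u Hu. destruct (idx_spec u Hu) as [Hi Hin].
  destruct (Linv_spec _ Hi) as [Hmaps [_ [Hright _]]].
  symmetry. exact (Hself _ Hi (Linv (idx u) u) u Hin (Hmaps u Hin) (Hright u Hin)).
Qed.

Lemma fixed_is_fif (f : R -> R) : interpolates f ->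
  (forall u, interval u -> rb_operator f u = f u) -> is_fif f.
Proof.
  intros Hinterp Hfix. split; [apply Hinterp|]. split; [apply Hinterp|].
  intros i Hi t u Hu Ht <-. destruct (Linv_spec i Hi) as [_ [Hleft _]].
  rewrite <- Hfix by exact (cell_in_interval x n x_incr i _ Hi Hu).
  destruct (rb_interpolant f Hinterp) as [_ Hbranch].
  rewrite (Hbranch i _ Hi Hu). unfold branch. now rewrite Hleft.
Qed.

(* Existence: the Picard iterates from the piecewise linear interpolant
   converge uniformly to a fractal interpolation function. *)
Lemma fif_exists : exists f, is_fif f.
Proof.
  assert (Hle : x 0%nat <= x n) by (apply (nodes_le x n x_incr); lia).
  destruct (linear_interpolant_exists x n x_incr n_pos idx idx_spec y) as [f0 Hf0].
  assert (Hiter : forall k, interpolates (picard rb_operator f0 k)).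
  { induction k as [|k IH]; [exact Hf0|]. exact (proj1 (rb_interpolant _ IH)). }
  destruct (Hiter 1%nat) as [Hc1 _]. destruct Hf0 as [Hc0 _].
  destruct (cont_on_within _ _ _ _ Hle Hc1 Hc0) as [D0 [HD0 Hwithin]].
  destruct (picard_fixed_point _ _ q rb_operator q_range rb_contraction f0 D0 HD0 Hwithin)
    as [f [C [HC [Hfix Hrate]]]].
  exists f. apply fixed_is_fif; [split | exact Hfix].
  - apply (cont_on_uniform_limit _ _ q C f (picard rb_operator f0) q_range HC);
      [intros k; apply Hiter | exact Hrate].
  - intros j Hj. apply Rminus_diag_uniq. apply (geometric_bound_zero _ C q q_range). intros k.
    rewrite <- (proj2 (Hiter k) j Hj). apply Hrate. split; apply (nodes_le x n x_incr); lia.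
Qed.

Lemma fif_unique (f g : R -> R) : is_fif f -> is_fif g -> forall t, interval t -> g t = f t.
Proof.
  intros Hf Hg.
  assert (Hle : x 0%nat <= x n) by (apply (nodes_le x n x_incr); lia).
  destruct (cont_on_within _ _ _ _ Hle (proj1 Hg) (proj1 Hf)) as [D [_ HD]].
  apply (fixed_point_unique _ _ q rb_operator q_range rb_contraction g f D);
    [apply fif_is_fixed; exact Hg | apply fif_is_fixed; exact Hf | exact HD].
Qed.

Lemma fif_attractor (f : R -> R) : is_fif f -> forall i, (1 <= i <= n)%nat -> forall p : R * R,
  (cell i (fst p) /\ snd p = f (fst p)) <->
  (exists j, (1 <= j <= n)%nat /\ conn x s e gamma i j /\
     exists t, cell j t /\ p = Wmap sc L a b i (t, f t)).
Proof.
  intros [_ [_ Hself]] i Hi [u v]. simpl.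
  destruct (Linv_spec _ Hi) as [Hmaps [_ [Hright _]]]. pose proof (dom_nodes i Hi).
  split.
  - intros [Hu ->]. set (t := Linv i u).
    destruct (cells_cover x (s (gamma i)) (e (gamma i)) t ltac:(lia) (Hmaps u Hu))
      as [j [Hj Htj]].
    exists j. split; [lia|]. split.
    + intros t' Ht'. unfold inI in *.
      pose proof (nodes_le x n x_incr (s (gamma i)) (j - 1) ltac:(lia)).
      pose proof (nodes_le x n x_incr j (e (gamma i)) ltac:(lia)). lra.
    + exists t. split; [exact Htj|]. unfold Wmap; simpl.
      unfold t. rewrite (Hright u Hu). f_equal. apply Hself; auto.
  - intros [j [Hj [Hconn [t [Ht Hp]]]]]. unfold Wmap in Hp; simpl in Hp.
    injection Hp as -> ->. split; [exact (L_maps_dom i t Hi (Hconn t Ht))|].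
    symmetry. apply Hself; auto. exact (L_maps_dom i t Hi (Hconn t Ht)).
Qed.

Lemma recurrent_fif : exists f : R -> R,
  is_fif f /\
  (forall g : R -> R, is_fif g -> forall t, interval t -> g t = f t) /\
  (forall i, (1 <= i <= n)%nat -> forall p : R * R,
     (cell i (fst p) /\ snd p = f (fst p)) <->
     (exists j, (1 <= j <= n)%nat /\ conn x s e gamma i j /\
        exists t, cell j t /\ p = Wmap sc L a b i (t, f t))) /\
  (forall p : R * R,
     (exists i, (1 <= i <= n)%nat /\ cell i (fst p) /\ snd p = f (fst p)) <->
     (interval (fst p) /\ snd p = f (fst p))).
Proof.
  destruct fif_exists as [f Hf].
  exists f. split; [exact Hf|]. split; [|split].
  - intros g Hg. exact (fif_unique f g Hf Hg).
  - exact (fif_attractor f Hf).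
  - intros p. rewrite <- (cells_cover_interval x n x_incr n_pos (fst p)). firstorder.
Qed.

End FractalInterpolation.

Theorem theorem1
  (n : nat) (x y : nat -> R) (l : nat) (s e gamma : nat -> nat)
  (L : nat -> R -> R) (a : R -> R) (La : R)
  (b : nat -> R -> R) (sc : nat -> R -> R)
  (Hn : (2 <= n)%nat)
  (Hx : forall i, (i < n)%nat -> x i < x (S i))
  (Hl : (2 <= l)%nat)
  (Hse : forall k, (1 <= k <= l)%nat ->
     (s k <= n)%nat /\ (e k <= n)%nat /\ (s k + 2 <= e k)%nat)
  (Hgamma : forall i, (1 <= i <= n)%nat -> (1 <= gamma i <= l)%nat)
  (HLhomeo : forall i, (1 <= i <= n)%nat ->
     homeo_on (x (s (gamma i))) (x (e (gamma i))) (x (i - 1)%nat) (x i) (L i))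
  (HLcontr : forall i, (1 <= i <= n)%nat -> exists c, c < 1 /\
     lip_on_with (x (s (gamma i))) (x (e (gamma i))) (L i) c)
  (HLends : forall i, (1 <= i <= n)%nat ->
     (L i (x (s (gamma i))) = x (i - 1)%nat /\ L i (x (e (gamma i))) = x i) \/
     (L i (x (s (gamma i))) = x i /\ L i (x (e (gamma i))) = x (i - 1)%nat))
  (Ha : 0 <= La /\ forall u v, Rabs (a u - a v) <= La * Rabs (u - v))
  (Hb : forall i, (1 <= i <= n)%nat -> exists K,
     lip_on_with (x (s (gamma i))) (x (e (gamma i))) (b i) K)
  (Hsc : forall i, (1 <= i <= n)%nat -> exists c, c < 1 /\
     lip_on_with (x (i - 1)%nat) (x i) (sc i) c)
  (Hscsup : forall i, (1 <= i <= n)%nat -> exists M,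
     (forall t, inI (x (i - 1)%nat) (x i) t -> Rabs (sc i t) <= M) /\ M * La < 1)
  (Hinterp : forall i, (1 <= i <= n)%nat -> forall alpha beta : nat,
     (alpha = s (gamma i) \/ alpha = e (gamma i)) ->
     (beta = (i - 1)%nat \/ beta = i) ->
     L i (x alpha) = x beta ->
     Fmap sc L a b i (x alpha) (y alpha) = y beta) :
  let good (f : R -> R) : Prop :=
    cont_on (x 0%nat) (x n) f /\
    (forall i, (i <= n)%nat -> f (x i) = y i) /\
    (forall i, (1 <= i <= n)%nat -> forall t u,
       inI (x (i - 1)%nat) (x i) u ->
       inI (x (s (gamma i))) (x (e (gamma i))) t -> L i t = u ->
       f u = Fmap sc L a b i t (f t)) in
  exists f : R -> R,
    good f /\
    (forall g : R -> R, good g -> forall t, inI (x 0%nat) (x n) t -> g t = f t) /\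
    (* A_i = union over j with c_ij = 1 of W_i(A_j) *)
    (forall i, (1 <= i <= n)%nat -> forall p : R * R,
       (inI (x (i - 1)%nat) (x i) (fst p) /\ snd p = f (fst p)) <->
       (exists j, (1 <= j <= n)%nat /\ conn x s e gamma i j /\
          exists t, inI (x (j - 1)%nat) (x j) t /\
            p = Wmap sc L a b i (t, f t))) /\
    (* union of the A_i is the graph of f over I *)
    (forall p : R * R,
       (exists i, (1 <= i <= n)%nat /\ inI (x (i - 1)%nat) (x i) (fst p) /\
          snd p = f (fst p)) <->
       (inI (x 0%nat) (x n) (fst p) /\ snd p = f (fst p))).
Proof.
  intros good.
  assert (Hn1 : (1 <= n)%nat) by lia.
  assert (Hdom : forall i, (1 <= i <= n)%nat -> (s (gamma i) < e (gamma i) <= n)%nat).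
  { intros i Hi. destruct (Hse _ (Hgamma i Hi)) as [? [? ?]]. lia. }
  assert (Hsc_cont : forall i, (1 <= i <= n)%nat -> exists c,
    lip_on_with (x (i - 1)%nat) (x i) (sc i) c).
  { intros i Hi. destruct (Hsc i Hi) as [c [_ Hc]]. now exists c. }
  destruct (inverse_branches n (fun i => x (s (gamma i))) (fun i => x (e (gamma i)))
    (fun i => x (i - 1)%nat) x L HLhomeo) as [Linv HLinv].
  destruct (cell_index_exists x n Hx Hn1) as [idx Hidx].
  destruct (common_bound_below_one n
    (fun i t => exists u, inI (x (i - 1)%nat) (x i) u /\ t = Rabs (sc i u) * La)) as [q [Hq Hqb]].
  { intros i Hi. destruct (Hscsup i Hi) as [M [HM HMLa]]. exists (M * La). split; [exact HMLa|].
    intros t [u [Hu ->]]. apply Rmult_le_compat_r; [apply Ha | exact (HM u Hu)]. }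
  exact (recurrent_fif n x y s e gamma L a La b sc Hx Hn1 Hdom HLhomeo HLends Ha Hb Hsc_cont Hinterp
    Linv idx q HLinv Hidx Hq (fun i u Hi Hu => Hqb i _ Hi (ex_intro _ u (conj Hu eq_refl)))).
Qed.
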